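(* Let $K$ be a field, $R=K[x_1,\ldots,x_n]$, $\prec$ an admissible monomial ordering on $R$, and $\mathcal{L}$ an involutive division of the class described in the context (determined by a permutation $\rho$ of $\{1,\ldots,n\}$ and a total monomial ordering $\sqsupset$ which is either admissible or the inverse of an admissible ordering). Let $G=\{g_1,\ldots,g_k\}$ be a minimal Gröbner basis of an ideal $I\subset R$ with respect to $\prec$, and for $i=1,\ldots,n$ let $h_i=\max_{g\in G}\deg_i(\mathrm{LM}(g))$. Then the set of products $$\bar G=\{\, m g \mid g\in G,\ m \text{ a monomial such that } \deg_i(m)\le h_i-\deg_i(\mathrm{LM}(g)) \text{ for all } i=1,\ldots,n\,\}$$ is an $\mathcal{L}$-involutive basis of $I$ with respect to $\prec$.
   Context: For a monomial $u=x_1^{\alpha_1}\cdots x_n^{\alpha_n}$, $\deg_i(u)=\alpha_i$; $\mathrm{LM}(f)$ denotes the leading monomial of $f$ with respect to $\prec$. The involutive division $\mathcal{L}$ is defined as follows. Fix a permutation $\rho$ of $\{1,\ldots,n\}$ and a total ordering $\sqsupset$ on monomials that is either an admissible monomial ordering or the inverse of one. For a finite set $U$ of monomials and $u,v\in U$, set $NM(u,\{u,v\})=\emptyset$ if $u\sqsupset v$ or ($u\sqsubset v$ and $v$ divides $u$); otherwise $NM(u,\{u,v\})=\{x_{\rho(i)}\}$ where $i=\min\{j \mid \deg_{\rho(j)}(u)<\deg_{\rho(j)}(v)\}$. The set of nonmultiplicative variables of $u\in U$ is $NM_{\mathcal{L}}(u,U)=\bigcup_{v\in U\setminus\{u\}}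 NM(u,\{u,v\})$, and the remaining variables form the set $M_{\mathcal{L}}(u,U)$ of multiplicative variables. Let $\mathcal{L}(u,U)$ be the set of all monomials in the variables of $M_{\mathcal{L}}(u,U)$. For $u\in U$ and a monomial $w$, $u$ is an $\mathcal{L}$-divisor of $w$ (written $u\mid_{\mathcal{L}} w$) if $w\in u\,\mathcal{L}(u,U)$. (For example, $\sqsupset=\succ_{\mathrm{lex}}$ with $\rho$ the identity gives Janet division.) A finite set $G'\subset I$ is an $\mathcal{L}$-involutive basis of $I$ with respect to $\prec$ if for every nonzero $f\in I$ there exists $g\in G'$ with $\mathrm{LM}(g)\mid_{\mathcal{L}}\mathrm{LM}(f)$, where the involutive divisibility is taken with respect to $U=\mathrm{LM}(G')=\{\mathrm{LM}(g)\mid g\in G'\}$. *)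

From HB Require Import structures.
From mathcomp Require Import all_boot all_order all_algebra all_fingroup.
From mathcomp Require Import mpoly.
Set Implicit Arguments.
Unset Strict Implicit.
Unset Printing Implicit Defensive.
Import Order.TTheory GRing.Theory.
Local Open Scope ring_scope.

Section Defs.
Variable n : nat.
Notation mon := ('X_{1..n}).

Definition total_order_mon (le : rel mon) : Prop :=
  [/\ reflexive le, antisymmetric le, transitive le & total le].

Definition admissible (le : rel mon) : Prop :=
  [/\ total_order_mon le,
      (forall a b c : mon, le a b -> le (a + c)%MM (b + c)%MM) &
      (forall a : mon, le 0%MM a)].

(* Leading monomial of p w.r.t. [le]: the [le]-largest monomial of the support
   (0 for p = 0, irrelevant). *)
Definition LM (le : rel mon) (K : nzRingType) (p : {mpoly K[n]}) : mon :=
  foldr (fun m acc => if le acc m then m else acc) 0%MM (msupp p).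

Definition mdivides (u w : mon) : bool := (u <= w)%MM.

Definition is_ideal (K : nzRingType) (I : {mpoly K[n]} -> Prop) : Prop :=
  [/\ I 0,
      (forall f g, I f -> I g -> I (f + g)) &
      (forall r f, I f -> I (r * f))].

Definition groebner_basis (le : rel mon) (K : nzRingType)
    (I : {mpoly K[n]} -> Prop) (G : seq {mpoly K[n]}) : Prop :=
  (forall g, g \in G -> I g) /\
  (forall f, I f -> f != 0 ->
     exists2 g, g \in G & mdivides (LM le g) (LM le f)).

Definition minimal_groebner_basis (le : rel mon) (K : nzRingType)
    (I : {mpoly K[n]} -> Prop) (G : seq {mpoly K[n]}) : Prop :=
  [/\ groebner_basis le I G,
      (forall g, g \in G -> g != 0) &
      (forall g g', g \in G -> g' \in G -> g != g' ->
         ~~ mdivides (LM le g') (LM le g))].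

(* The involutive division L determined by rho and sq.  [sq a b] means
   a "below-or-equal" b for the ordering ⊐, i.e. b ⊐ a or b = a. *)
Definition sq_gt (sq : rel mon) (u v : mon) : Prop := sq v u /\ u != v.
Definition sq_lt (sq : rel mon) (u v : mon) : Prop := sq u v /\ u != v.

Definition NM_pair (rho : {perm 'I_n}) (sq : rel mon) (u v : mon) (j : 'I_n)
    : Prop :=
  ~ (sq_gt sq u v \/ (sq_lt sq u v /\ mdivides v u)) /\
  exists i : 'I_n,
    [/\ j = rho i, u (rho i) < v (rho i) &
        forall i' : 'I_n, i' < i -> ~~ (u (rho i') < v (rho i'))]%N.

Definition NM_L (rho : {perm 'I_n}) (sq : rel mon) (U : mon -> Prop)
    (u : mon) (j : 'I_n) : Prop :=
  exists v, [/\ U v, v <> u & NM_pair rho sq u v j].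

Definition M_L (rho : {perm 'I_n}) (sq : rel mon) (U : mon -> Prop)
    (u : mon) (j : 'I_n) : Prop := ~ NM_L rho sq U u j.

Definition L_divides (rho : {perm 'I_n}) (sq : rel mon) (U : mon -> Prop)
    (u w : mon) : Prop :=
  exists t : mon, w = (u + t)%MM /\
    forall j : 'I_n, (0 < t j)%N -> M_L rho sq U u j.

Definition finite_set (T : eqType) (A : T -> Prop) : Prop :=
  exists s : seq T, forall x, A x <-> x \in s.

Definition involutive_basis (rho : {perm 'I_n}) (sq : rel mon)
    (le : rel mon) (K : nzRingType) (I : {mpoly K[n]} -> Prop)
    (G' : {mpoly K[n]} -> Prop) : Prop :=
  [/\ finite_set G',
      (forall g, G' g -> I g) &
      (forall f, I f -> f != 0 ->
         exists2 g, G' g &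
           L_divides rho sq (fun u => exists2 g', G' g' & u = LM le g')
                     (LM le g) (LM le f))].

Definition hmax (le : rel mon) (K : nzRingType) (G : seq {mpoly K[n]})
    (i : 'I_n) : nat :=
  \max_(g <- G) (LM le g i).

Definition Gbar (le : rel mon) (K : nzRingType) (G : seq {mpoly K[n]})
    (f : {mpoly K[n]}) : Prop :=
  exists2 g, g \in G & exists m : mon,
    (forall i : 'I_n, m i <= hmax le G i - LM le g i)%N /\ f = 'X_[m] * g.

End Defs.

From HB Require Import structures.
From mathcomp Require Import all_boot all_order all_algebra all_fingroup.
From mathcomp Require Import mpoly.
Set Implicit Arguments.
Unset Strict Implicit.
Unset Printing Implicit Defensive.
Local Open Scope ring_scope.

(* For f in I choose g in G with LM g | LM f, and let u be LM f truncated
   componentwise at h.  Then u is the leading monomial of X^(u - LM g) g, an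
   element of Gbar, and in every variable x_j in which LM f exceeds u the
   exponent of u is already h_j.  No leading monomial of Gbar has a larger
   j-th exponent, so x_j cannot be nonmultiplicative for u: the condition
   deg_j u < deg_j v in the definition of NM never holds.  In particular,
   neither the minimality of G nor the choice of rho and the ordering ⊐
   matters. *)

Section LeadingMonomial.
Variables (n : nat) (le : rel 'X_{1..n}).
Hypothesis le_adm : admissible le.

Let fold_max (s : seq 'X_{1..n}) :=
  foldr (fun m acc => if le acc m then m else acc) 0%MM s.

Lemma fold_max_spec (s : seq 'X_{1..n}) :
  s != [::] -> fold_max s \in s /\ forall x, x \in s -> le x (fold_max s).
Proof.
case: le_adm => -[le_refl _ le_trans le_total] _ le0.
rewrite /fold_max; elim: s => // x s IH _ /=.
case: s IH => [|y s] IH /=.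
  rewrite le0 mem_seq1 eqxx; split=> // z; rewrite mem_seq1 => /eqP ->.
  exact: le_refl.
have [r_in r_max] := IH isT.
set r := foldr _ _ (y :: s) in r_in r_max *.
case: ifP => le_rx.
  split; first by rewrite mem_head.
  move=> z; rewrite in_cons => /orP[/eqP->|/r_max le_zr]; first exact: le_refl.
  exact: le_trans le_zr le_rx.
split; first by rewrite in_cons r_in orbT.
move=> z; rewrite in_cons => /orP[/eqP->|/r_max //].
by case/orP: (le_total r x); rewrite ?le_rx.
Qed.

Lemma LM_max_msupp (K : nzRingType) (p : {mpoly K[n]}) : p != 0 ->
  LM le p \in msupp p /\ forall m, m \in msupp p -> le m (LM le p).
Proof. by move=> p_neq0; apply: fold_max_spec; rewrite msupp_eq0. Qed.

Lemma LM_mulX (K : nzRingType) (g : {mpoly K[n]}) (m : 'X_{1..n}) :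
  g != 0 -> LM le ('X_[m] * g) = (m + LM le g)%MM.
Proof.
move=> g_neq0; case: (le_adm) => -[_ le_anti _ _] le_add _.
have [LMg_in LMg_max] := LM_max_msupp g_neq0.
have shift_in : (m + LM le g)%MM \in msupp ('X_[m] * g).
  by rewrite mcoeff_msupp -commr_mpolyX mcoeffMX -mcoeff_msupp.
have Xg_neq0 : 'X_[m] * g != 0.
  by apply: contraTneq shift_in => ->; rewrite msupp0.
have [LMXg_in LMXg_max] := LM_max_msupp Xg_neq0.
apply: le_anti; rewrite LMXg_max // andbT.
move: LMXg_in; rewrite -commr_mpolyX (perm_mem (msuppMX g m)).
case/mapP=> y /LMg_max /(le_add _ _ m) le_ym ->.
by rewrite ![(m + _)%MM]addmC.
Qed.

End LeadingMonomial.

Section InvolutiveDivision.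
Variables (n : nat) (rho : {perm 'I_n}) (sq : rel 'X_{1..n}).
Variable U : 'X_{1..n} -> Prop.

Lemma M_L_maxdeg (u : 'X_{1..n}) (j : 'I_n) :
  (forall v, U v -> v j <= u j)%N -> M_L rho sq U u j.
Proof.
move=> maxdeg [v [Uv _ [_ [i [j_rho lt_uv _]]]]].
by move: lt_uv; rewrite -j_rho ltnNge maxdeg.
Qed.

Lemma L_divides_lem (u w : 'X_{1..n}) : (u <= w)%MM ->
  (forall j, u j < w j -> M_L rho sq U u j)%N -> L_divides rho sq U u w.
Proof.
move=> /mnm_lepP le_uw mult; exists (w - u)%MM; split.
  by apply/mnmP => i; rewrite mnmDE mnmBE subnKC.
by move=> j; rewrite mnmBE subn_gt0; apply: mult.
Qed.

End InvolutiveDivision.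

Section Gbar.
Variables (n : nat) (le : rel 'X_{1..n}) (K : nzRingType).
Variable G : seq {mpoly K[n]}.
Hypothesis le_adm : admissible le.
Hypothesis G_neq0 : forall g, g \in G -> g != 0.

Let h := hmax le G.

Lemma LM_le_hmax g i : g \in G -> (LM le g i <= h i)%N.
Proof. by move=> Gg; apply: leq_bigmax_seq. Qed.

Lemma LM_Gbar_le_hmax f i : Gbar le G f -> (LM le f i <= h i)%N.
Proof.
move=> [g Gg [m [m_le ->]]].
rewrite LM_mulX ?G_neq0 // mnmDE -(subnK (LM_le_hmax i Gg)) leq_add2r.
exact: m_le.
Qed.

Lemma Gbar_finite : finite_set (Gbar le G).
Proof.
pose B := (\sum_i h i).+1.
pose cofactors (g : {mpoly K[n]}) :=
  [seq m : 'X_{1..n < B} <- enum {: 'X_{1..n < B}} |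
     [forall i, val m i <= h i - LM le g i]%N].
exists [seq 'X_[val m] * g | g <- G, m <- cofactors g] => f; split.
- move=> [g Gg [m [m_le ->]]].
  have mB : (mdeg m < B)%N.
    rewrite ltnS mdegE; apply: leq_sum => i _.
    exact: leq_trans (m_le i) (leq_subr _ _).
  apply/allpairsPdep; exists g, (BMultinom mB); split=> //.
  by rewrite mem_filter mem_enum andbT; apply/forallP.
- case/allpairsPdep=> g [m [Gg]].
  rewrite mem_filter => /andP[/forallP m_le _] ->.
  by exists g => //; exists (val m).
Qed.

Lemma Gbar_LM_min_hmax g (w : 'X_{1..n}) : g \in G -> (LM le g <= w)%MM ->
  exists2 g', Gbar le G g' &
    LM le g' = [multinom minn (w i) (h i) | i < n].
Proof.
set u := [multinom _ | i < n] => Gg /mnm_lepP le_gw.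
have le_gu : (LM le g <= u)%MM.
  by apply/mnm_lepP => i; rewrite mnmE leq_min le_gw LM_le_hmax.
exists ('X_[u - LM le g] * g); last by rewrite LM_mulX ?G_neq0 // submK.
exists g => //; exists (u - LM le g)%MM; split=> // i.
by rewrite mnmBE mnmE leq_sub2r // geq_minr.
Qed.

End Gbar.

Theorem proposition1 (K : fieldType) (n : nat) (le : rel 'X_{1..n})
    (rho : {perm 'I_n}) (sq : rel 'X_{1..n})
    (I : {mpoly K[n]} -> Prop) (G : seq {mpoly K[n]}) :
  admissible le ->
  (admissible sq \/ admissible (fun a b => sq b a)) ->
  is_ideal I ->
  minimal_groebner_basis le I G ->
  involutive_basis rho sq le I (Gbar le G).
Proof.
move=> le_adm _ [_ _ I_mull] [[G_I G_LM_div] G_neq0 _].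
split; first exact: Gbar_finite.
  by move=> _ [g Gg [m [_ ->]]]; apply/I_mull/G_I.
move=> f If f_neq0.
have [g Gg g_div_f] := G_LM_div f If f_neq0.
have [g' Gbar_g' LM_g'] := Gbar_LM_min_hmax le_adm G_neq0 Gg g_div_f.
exists g' => //; rewrite LM_g'; apply: L_divides_lem => [|j].
  by apply/mnm_lepP => i; rewrite mnmE geq_minl.
rewrite mnmE gtn_min ltnn /= => /ltnW /minn_idPr h_le_w.
apply: M_L_maxdeg => _ [f' Gbar_f' ->].
by rewrite mnmE h_le_w; apply: (LM_Gbar_le_hmax le_adm G_neq0).
Qed.
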